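(* Let $n\geq 1$, $m=\frac{n^2+n}{2}$, and let $z:\mathbb{R}^n\to\mathbb{R}^m$ be the map $z(x)=\begin{bmatrix}x_1^2 & x_1x_2 & \cdots & x_1x_n & x_2^2 & x_2x_3 & \cdots & x_n^2\end{bmatrix}^\top$ listing all quadratic monomials of $x$. Let $E=E^\top\in\mathbb{R}^{n\times n}$ be positive definite, $\alpha>0$, and $\mathcal{E}_\alpha=\{x : x^\top E x\leq\alpha^2\}$. Let $c_1,c_2\in\mathbb{R}^n$ be two nonzero, linearly independent vectors, and define $\phi(x)=x^\top Q x$ with $Q=\frac12(c_1c_2^\top+c_2c_1^\top)$. Then there exists $b\in\mathbb{R}^m$ such that $\phi(x)=b^\top z(x)$ for all $x$. Moreover, for $W$ equal to either $(c_2^\top E^{-1}c_2)\,c_1c_1^\top$ or $(c_1^\top E^{-1}c_1)\,c_2c_2^\top$, we have $$\begin{bmatrix} x\\ w\end{bmatrix}^\top\begin{bmatrix}\alpha^2 W & 0\\ 0 & -bb^\top\end{bmatrix}\begin{bmatrix} x\\ w\end{bmatrix}\geq 0\quad\text{for all } x\in\mathcal{E}_\alpha,\ w=z(x).$$ *)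

From HB Require Import structures.
From mathcomp Require Import all_boot all_order all_algebra.
Set Implicit Arguments. Unset Strict Implicit. Unset Printing Implicit Defensive.
Import Order.TTheory GRing.Theory Num.Theory.
Local Open Scope ring_scope.

Definition msize (n : nat) : nat := ((n * n + n) %/ 2)%N.

Definition qpairs (n : nat) : seq (nat * nat) :=
  [seq (i, j) | i <- iota 0 n, j <- iota i (n - i)].

(* i-th coordinate (0-based) of x, 0 if out of range *)
Definition vget (R : ringType) (n : nat) (x : 'cV[R]_n) (i : nat) : R :=
  match @insub nat (fun k => k < n)%N 'I_n i with
  | Some k => x k 0
  | None => 0
  end.

Definition zvec (R : ringType) (n : nat) (x : 'cV[R]_n) : 'cV[R]_(msize n) :=
  \col_(k < msize n)
    (let p := nth (0%N, 0%N) (qpairs n) k in vget x p.1 * vget x p.2).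

Definition qform (R : ringType) (n : nat) (M : 'M[R]_n) (x : 'cV[R]_n) : R :=
  (x^T *m M *m x) 0 0.

Definition posdef (R : numDomainType) (n : nat) (E : 'M[R]_n) : Prop :=
  forall x : 'cV[R]_n, x != 0 -> 0 < qform E x.

(* Take for b the coefficients Q_ii and Q_ij + Q_ji (i < j) of the monomials,
   so that b'z(x) = x'Qx = (c1'x)(c2'x).  On the block vector the form equals
   alpha^2 x'Wx - phi(x)^2; for W = k2 c1 c1' with k2 = c2' E^-1 c2 this is
   (c1'x)^2 (alpha^2 k2 - (c2'x)^2), which is nonnegative because Cauchy-Schwarz
   for the inner product of E, applied to E^-1 c2 and x, gives
   (c2'x)^2 <= k2 x'Ex <= k2 alpha^2.  The other choice of W is symmetric. *)

From HB Require Import structures.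
From mathcomp Require Import all_boot all_order all_algebra.
From mathcomp Require Import ring.
Set Implicit Arguments. Unset Strict Implicit. Unset Printing Implicit Defensive.
Import Order.TTheory GRing.Theory Num.Theory.
Local Open Scope ring_scope.

Lemma mx11_trmx (T : Type) (M : 'M[T]_1) : M^T 0 0 = M 0 0.
Proof. by rewrite mxE. Qed.

Section QuadraticForm.
Variables (R : comNzRingType) (n : nat).
Implicit Types (M : 'M[R]_n) (u x y c d : 'cV[R]_n).

Lemma qformD M1 M2 x : qform (M1 + M2) x = qform M1 x + qform M2 x.
Proof. by rewrite /qform mulmxDr mulmxDl mxE. Qed.

Lemma qformZ a M x : qform (a *: M) x = a * qform M x.
Proof. by rewrite /qform -scalemxAr -scalemxAl mxE. Qed.

Lemma qformN M x : qform (- M) x = - qform M x.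
Proof. by rewrite -scaleN1r qformZ mulN1r. Qed.

Lemma qform_rank1 c d x : qform (c *m d^T) x = (c^T *m x) 0 0 * (d^T *m x) 0 0.
Proof.
rewrite /qform !mulmxA -(mulmxA _ _ x) mxE big_ord1.
by rewrite -mx11_trmx trmx_mul trmxK.
Qed.

Lemma mxbilinC M x y : M^T = M ->
  (y^T *m M *m x) 0 0 = (x^T *m M *m y) 0 0.
Proof. by move=> MT; rewrite -mx11_trmx !trmx_mul trmxK MT mulmxA. Qed.

Lemma mxbilinDr M a b u x y :
  (u^T *m M *m (a *: x + b *: y)) 0 0 =
  a * (u^T *m M *m x) 0 0 + b * (u^T *m M *m y) 0 0.
Proof.
by rewrite linearD !linearZ [(_ + _ : 'M_1) 0 0]mxE ![(_ *: _ : 'M_1) 0 0]mxE.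
Qed.

Lemma qform_lincomb M a b x y : M^T = M ->
  qform M (a *: x + b *: y) =
  a ^+ 2 * qform M x + 2 * a * b * (x^T *m M *m y) 0 0 + b ^+ 2 * qform M y.
Proof.
move=> MT; rewrite /qform mxbilinDr.
rewrite !(mxbilinC _ (a *: x + b *: y) MT) !mxbilinDr.
rewrite (mxbilinC y x MT); ring.
Qed.

End QuadraticForm.

Lemma qform_block_diag (R : nzRingType) n1 n2 (A : 'M[R]_n1) (D : 'M[R]_n2) x y :
  qform (block_mx A 0 0 D) (col_mx x y) = qform A x + qform D y.
Proof.
by rewrite /qform tr_col_mx mul_row_block !mulmx0 addr0 add0r mul_row_col mxE.
Qed.

Lemma qform_sym_rank2 (R : numFieldType) n (c d x : 'cV[R]_n) :
  qform (2^-1 *: (c *m d^T + d *m c^T)) x = (c^T *m x) 0 0 * (d^T *m x) 0 0.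
Proof. by rewrite qformZ qformD !qform_rank1; field. Qed.

Section PositiveDefinite.
Variables (R : numDomainType) (n : nat) (E : 'M[R]_n).
Hypotheses (ET : E^T = E) (EP : posdef E).

Lemma posdef_ge0 x : 0 <= qform E x.
Proof.
have [->|x0] := eqVneq x 0; last exact/ltW/EP.
by rewrite /qform mulmx0 mxE.
Qed.

Lemma posdef_CauchySchwarz x y :
  ((x^T *m E *m y) 0 0) ^+ 2 <= qform E x * qform E y.
Proof.
have [->|y0] := eqVneq y 0; first by rewrite /qform !mulmx0 mxE expr0n mulr0.
set a := (x^T *m E *m y) 0 0; set B := qform E y.
have B_gt0 : 0 < B by exact: EP.
have := posdef_ge0 (B *: x + (- a) *: y).
rewrite qform_lincomb // -/a -/B.
suff -> : B ^+ 2 * qform E x + 2 * B * - a * a + (- a) ^+ 2 * B =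
          B * (qform E x * B - a ^+ 2) by rewrite pmulr_rge0 // subr_ge0.
ring.
Qed.

End PositiveDefinite.

Section InverseForm.
Variables (R : numFieldType) (n : nat) (E : 'M[R]_n).
Hypotheses (ET : E^T = E) (EP : posdef E).
Implicit Types (c x : 'cV[R]_n).

Lemma posdef_unitmx : E \in unitmx.
Proof.
rewrite unitmxE unitfE; apply/negP => /det0P [v v0 vE].
have := @EP v^T; rewrite trmx_eq0 => /(_ v0).
by rewrite /qform trmxK vE mul0mx mxE ltxx.
Qed.

Lemma qform_invmx c : qform (invmx E) c = qform E (invmx E *m c).
Proof.
by rewrite /qform trmx_mul trmx_inv ET !mulmxA mulmxKV ?posdef_unitmx.
Qed.

Lemma dot_invmx c x : (c^T *m x) 0 0 = ((invmx E *m c)^T *m E *m x) 0 0.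
Proof. by rewrite trmx_mul trmx_inv ET mulmxKV ?posdef_unitmx. Qed.

Lemma qform_invmx_ge0 c : 0 <= qform (invmx E) c.
Proof. by rewrite qform_invmx posdef_ge0. Qed.

Lemma sqr_dot_le_qform_invmx c x :
  ((c^T *m x) 0 0) ^+ 2 <= qform (invmx E) c * qform E x.
Proof. by rewrite dot_invmx qform_invmx posdef_CauchySchwarz. Qed.

End InverseForm.

Lemma sqr_dot_mul_le_ellipsoid (R : realFieldType) n (E : 'M[R]_n) (alpha : R)
    (c d x : 'cV[R]_n) :
  E^T = E -> posdef E -> qform E x <= alpha ^+ 2 ->
  ((c^T *m x) 0 0 * (d^T *m x) 0 0) ^+ 2 <=
  alpha ^+ 2 * qform (qform (invmx E) d *: (c *m c^T)) x.
Proof.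
move=> ET EP x_in.
have d_bound : ((d^T *m x) 0 0) ^+ 2 <= qform (invmx E) d * alpha ^+ 2.
  apply: le_trans (sqr_dot_le_qform_invmx ET EP d x) _.
  by apply: ler_wpM2l; rewrite ?qform_invmx_ge0.
rewrite qformZ qform_rank1 -expr2 exprMn.
set a := (c^T *m x) 0 0; set kd := qform (invmx E) d.
have -> : alpha ^+ 2 * (kd * a ^+ 2) = a ^+ 2 * (kd * alpha ^+ 2) by ring.
by apply: ler_wpM2l; rewrite ?sqr_ge0.
Qed.

Lemma sum_square_upper (V : nmodType) n (g : nat -> nat -> V) :
  \sum_(0 <= i < n) \sum_(0 <= j < n) g i j =
  \sum_(0 <= i < n) \sum_(i <= j < n) (if i == j then g i i else g i j + g j i).
Proof.
elim: n => [|n IHn]; first by rewrite !big_geq.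
rewrite big_nat_recr //= [RHS]big_nat_recr //= big_nat1 eqxx big_nat_recr //=.
have -> : \sum_(0 <= i < n) \sum_(0 <= j < n.+1) g i j =
          \sum_(0 <= i < n) (\sum_(0 <= j < n) g i j + g i n).
  by apply: eq_big_nat => i _; rewrite big_nat_recr.
have -> : \sum_(0 <= i < n) \sum_(i <= j < n.+1)
            (if i == j then g i i else g i j + g j i) =
          \sum_(0 <= i < n) (\sum_(i <= j < n)
            (if i == j then g i i else g i j + g j i) + (g i n + g n i)).
  apply: eq_big_nat => i /andP[_ lt_in].
  by rewrite big_nat_recr 1?ltnW //= (ltn_eqF lt_in).
by rewrite !big_split /= -IHn !addrA.
Qed.

Lemma size_qpairs n : size (qpairs n) = msize n.
Proof.
rewrite size_allpairs_dep sumnE big_map -{1}[n]subn0 -/(index_iota 0 n).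
rewrite big_nat_rev /=.
under eq_big_nat => i /andP[_ lt_in] do rewrite size_iota add0n subKn //.
rewrite -[\sum_(0 <= i < n) i.+1]add0n -(big_nat_recl _ _ (fun i => i)) //.
by rewrite bin2_sum bin2 /msize divn2 mulSn addnC.
Qed.

Section MonomialCoordinates.
Variables (R : comNzRingType) (n : nat).
Implicit Types (M : 'M[R]_n) (x : 'cV[R]_n).

Definition mxget M (i j : nat) : R :=
  if (insub i : option 'I_n, insub j : option 'I_n) is (Some a, Some b)
  then M a b else 0.

Definition upper_coef M (p : nat * nat) : R :=
  if p.1 == p.2 then mxget M p.1 p.1 else mxget M p.1 p.2 + mxget M p.2 p.1.

Definition qform_coef M : 'cV[R]_(msize n) :=
  \col_(k < msize n) upper_coef M (nth (0, 0)%N (qpairs n) k).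

Lemma qform_nat_sum M x :
  qform M x = \sum_(0 <= i < n) \sum_(0 <= j < n) vget x i * mxget M i j * vget x j.
Proof.
rewrite /qform mxE exchange_big big_mkord; apply: eq_bigr => j _.
rewrite mxE big_distrl big_mkord; apply: eq_bigr => i _.
by rewrite mxE /vget /mxget !valK.
Qed.

Lemma qform_coefP M x : qform M x = ((qform_coef M)^T *m zvec x) 0 0.
Proof.
transitivity (\sum_(p <- qpairs n) upper_coef M p * (vget x p.1 * vget x p.2)).
  rewrite qform_nat_sum sum_square_upper big_allpairs_dep /index_iota subn0.
  apply: eq_bigr => i _; apply: eq_bigr => j _.
  by rewrite /upper_coef /=; case: eqP => [<-|_]; ring.
rewrite mxE (big_nth (0, 0)%N) size_qpairs big_mkord.
by apply: eq_bigr => k _; rewrite !mxE.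
Qed.

End MonomialCoordinates.

Theorem theorem2 (R : realFieldType) (n : nat) (hn : (1 <= n)%N)
  (E : 'M[R]_n) (alpha : R) (c1 c2 : 'cV[R]_n) :
  E^T = E -> posdef E -> 0 < alpha ->
  c1 != 0 -> c2 != 0 -> row_free (col_mx c1^T c2^T) ->
  let Q : 'M[R]_n := 2^-1 *: (c1 *m c2^T + c2 *m c1^T) in
  exists b : 'cV[R]_(msize n),
    (forall x : 'cV[R]_n, qform Q x = (b^T *m zvec x) 0 0) /\
    (forall W : 'M[R]_n,
       W = (c2^T *m invmx E *m c2) 0 0 *: (c1 *m c1^T) \/
       W = (c1^T *m invmx E *m c1) 0 0 *: (c2 *m c2^T) ->
       forall x : 'cV[R]_n, qform E x <= alpha ^+ 2 ->
         0 <= qform (block_mx (alpha ^+ 2 *: W) 0 0 (- (b *m b^T)))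
                    (col_mx x (zvec x))).
Proof.
move=> ET EP _ _ _ _ Q.
exists (qform_coef Q); split=> [x|W defW x x_in]; first exact: qform_coefP.
rewrite qform_block_diag qformN qform_rank1 -qform_coefP qformZ subr_ge0.
rewrite -expr2 qform_sym_rank2.
by case: defW => ->; [|rewrite mulrC]; apply: sqr_dot_mul_le_ellipsoid.
Qed.
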